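(* Let $n\ge 1$ be an integer, let $\varepsilon\in(0,1)$ and set $\delta=-\frac{\log_2(1-\varepsilon)}{n}$. Then every channel $W$ satisfies $$\frac{\mathcal{R}^{(\varepsilon)}_{W,n}}{2}-\delta\;\le\;\mathcal{R}^{(0)}_{W,n}.$$ Consequently, with $\delta^*=-\log_2(1-\varepsilon)$, every channel $W$ satisfies $\frac{\mathcal{R}^{(\varepsilon)}_{W}}{2}-\delta^*\le \mathcal{R}^{(0)}_{W}$.
   Context: Fix an integer $q\ge 1$, $Q=2^q$, $[Q]=\{1,\dots,Q\}$. A (two-source/two-terminal deterministic) channel is a function $W=(W_1,W_2)$ with $W_i:[Q]^2\to\mathcal{O}$ for some finite output alphabet $\mathcal{O}$. For block length $n$, $W^{(n)}=(W^{(n)}_1,W^{(n)}_2)$ acts coordinatewise: for $x=(x_1,\dots,x_n),y=(y_1,\dots,y_n)\in[Q]^n$, $W^{(n)}_i(x,y)=(W_i(x_1,y_1),\dots,W_i(x_n,y_n))$. A code of block length $n$ with message sets $[M_1],[M_2]$ consists of encoders $E_i:[M_i]\to[Q]^n$ and decoders $D_i:\mathcal{O}^n\to[M_i]$ ($i=1,2$); it succeeds on $(m_1,m_2)$ if $D_i(W^{(n)}_i(E_1(m_1),E_2(m_2)))=m_i$ for both $i=1,2$. A rate pair $(R_1,R_2)$ is achievable with probability $1-\varepsilon$ and block length $n$ if, with $M_i=2^{R_in}$ (positive integers), some code succeeds with probability at least $1-\varepsilon$ when $(m_1,m_2)$ is uniform on $[M_1]\times[M_2]$. The $\varepsilon$-error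 sum capacity is $\mathcal{R}^{(\varepsilon)}_{W,n}=\sup(R_1+R_2)$ over such pairs, and $\mathcal{R}^{(\varepsilon)}_{W}=\sup_n\mathcal{R}^{(\varepsilon)}_{W,n}$. For $\varepsilon=0$ the code must succeed on every message pair. Logarithms are base 2. *)

From mathcomp Require Import all_boot.
From Stdlib Require Import Reals ClassicalEpsilon.

Set Implicit Arguments.
Unset Strict Implicit.
Unset Printing Implicit Defensive.

Definition log2 (x : R) : R := (ln x / ln 2)%R.

(* Input alphabet [Q] with Q = 2^q is 'I_(2^q) (0-indexed). Words of length n
   are {ffun 'I_n -> 'I_(2^q)}. A channel component W_i : [Q]^2 -> O. *)
Definition word (q n : nat) := {ffun 'I_n -> 'I_(2 ^ q)}.

Definition chan_n (q : nat) (O : finType) (Wi : 'I_(2 ^ q) -> 'I_(2 ^ q) -> O)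
  (n : nat) (x y : word q n) : {ffun 'I_n -> O} :=
  [ffun k => Wi (x k) (y k)].

Definition succ_count (q : nat) (O : finType)
  (W1 W2 : 'I_(2 ^ q) -> 'I_(2 ^ q) -> O) (n M1 M2 : nat)
  (E1 : 'I_M1 -> word q n) (E2 : 'I_M2 -> word q n)
  (D1 : {ffun 'I_n -> O} -> 'I_M1) (D2 : {ffun 'I_n -> O} -> 'I_M2) : nat :=
  #|[set p : 'I_M1 * 'I_M2 |
      (D1 (chan_n W1 (E1 p.1) (E2 p.2)) == p.1)
      && (D2 (chan_n W2 (E1 p.1) (E2 p.2)) == p.2)]|.

(* Some code with message sets [M1],[M2] succeeds with probability >= 1 - eps
   for uniformly random messages. *)
Definition code_exists (q : nat) (O : finType)
  (W1 W2 : 'I_(2 ^ q) -> 'I_(2 ^ q) -> O) (n M1 M2 : nat) (eps : R) : Prop :=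
  exists (E1 : 'I_M1 -> word q n) (E2 : 'I_M2 -> word q n)
         (D1 : {ffun 'I_n -> O} -> 'I_M1) (D2 : {ffun 'I_n -> O} -> 'I_M2),
    (INR (succ_count W1 W2 E1 E2 D1 D2) >= (1 - eps) * INR (M1 * M2))%R.

Definition achievable (q : nat) (O : finType)
  (W1 W2 : 'I_(2 ^ q) -> 'I_(2 ^ q) -> O) (n : nat) (eps R1 R2 : R) : Prop :=
  exists M1 M2 : nat, (0 < M1)%N /\ (0 < M2)%N /\
    Rpower 2 (R1 * INR n) = INR M1 /\ Rpower 2 (R2 * INR n) = INR M2 /\
    code_exists W1 W2 n M1 M2 eps.

Definition sum_rates (q : nat) (O : finType)
  (W1 W2 : 'I_(2 ^ q) -> 'I_(2 ^ q) -> O) (n : nat) (eps : R) : R -> Prop :=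
  fun r => exists R1 R2 : R, achievable W1 W2 n eps R1 R2 /\ r = (R1 + R2)%R.

Definition Rsup (S : R -> Prop) : R := epsilon (inhabits 0%R) (is_lub S).

Definition sum_cap_n (q : nat) (O : finType)
  (W1 W2 : 'I_(2 ^ q) -> 'I_(2 ^ q) -> O) (n : nat) (eps : R) : R :=
  Rsup (sum_rates W1 W2 n eps).

Definition sum_cap (q : nat) (O : finType)
  (W1 W2 : 'I_(2 ^ q) -> 'I_(2 ^ q) -> O) (eps : R) : R :=
  Rsup (fun r => exists n : nat, (1 <= n)%N /\ r = sum_cap_n W1 W2 n eps).

From mathcomp Require Import all_boot.
From Stdlib Require Import Reals ClassicalEpsilon Lra.

Set Implicit Arguments.
Unset Strict Implicit.
Unset Printing Implicit Defensive.

(* Take a code of block length n with M1 x M2 messages that succeeds on at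
   least (1 - eps) M1 M2 message pairs.  Averaging over the M2 columns, some
   message m2 of user 2 is decoded jointly with at least (1 - eps) M1
   messages m1.  Freezing user 2's input to E2 m2 and keeping only these m1
   gives a zero-error code of rates (R1', 0) with R1 <= R1' + delta, where
   delta = -log2(1 - eps)/n pays for the discarded fraction of messages.
   Exchanging the roles of the users gives a zero-error code of rates
   (0, R2') with R2 <= R2' + delta.  Hence R1, R2 <= R0 + delta, where R0 is
   the zero-error sum capacity, and R1 + R2 <= 2 (R0 + delta). *)

Local Open Scope R_scope.

Lemma ln2_pos : 0 < ln 2.
Proof. have := ln_lt_2; lra. Qed.

Lemma log2_Rpower (x : R) : log2 (Rpower 2 x) = x.
Proof. by rewrite /log2 /Rpower ln_exp; field; have := ln2_pos; lra. Qed.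

Lemma Rpower_log2 (x : R) : 0 < x -> Rpower 2 (log2 x) = x.
Proof.
move=> x_pos; rewrite /Rpower /log2 -[RHS]exp_ln //; congr exp.
by field; have := ln2_pos; lra.
Qed.

Lemma log2_mult (x y : R) : 0 < x -> 0 < y -> log2 (x * y) = log2 x + log2 y.
Proof. by move=> x_pos y_pos; rewrite /log2 ln_mult // /Rdiv Rmult_plus_distr_r. Qed.

Lemma log2_pow (x : R) (k : nat) : 0 < x -> log2 (x ^ k) = INR k * log2 x.
Proof. by move=> x_pos; rewrite /log2 ln_pow // /Rdiv Rmult_assoc. Qed.

Lemma log2_le (x y : R) : 0 < x -> x <= y -> log2 x <= log2 y.
Proof.
move=> x_pos [lt_xy | <-]; last exact: Rle_refl.
apply: Rmult_le_compat_r; last exact: Rlt_le (ln_increasing _ _ x_pos lt_xy).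
exact: Rlt_le (Rinv_0_lt_compat _ ln2_pos).
Qed.

(* Losing a fraction eps of the messages costs at most -log2(1 - eps)/n
   in rate. *)
Lemma rate_loss (n Rt M k eps : R) :
  0 < n -> 0 < M -> 0 < 1 - eps -> Rt * n = log2 M -> (1 - eps) * M <= k ->
  Rt <= log2 k / n + - log2 (1 - eps) / n.
Proof.
move=> n_pos M_pos eps_lt1 rate_M M_le_k.
have loss_pos : 0 < (1 - eps) * M by apply: Rmult_lt_0_compat.
have := log2_le loss_pos M_le_k; rewrite log2_mult // -rate_M => log_le.
apply: (Rmult_le_reg_r n) => //.
replace ((log2 k / n + - log2 (1 - eps) / n) * n)
  with (log2 k - log2 (1 - eps)) by (field; lra).
lra.
Qed.

Lemma log2_nonpos (x : R) : 0 < x <= 1 -> log2 x <= 0.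
Proof.
move=> [x_pos x_le1]; have := log2_le x_pos x_le1.
by rewrite /log2 ln_1 /Rdiv Rmult_0_l.
Qed.

Lemma div_INR_le (d : R) (n : nat) : 0 <= d -> (1 <= n)%nat -> d / INR n <= d.
Proof.
move=> d_ge0 n_ge1; have n_ge1' : 1 <= INR n by apply: (le_INR 1); apply/leP.
apply: (Rmult_le_reg_r (INR n)); first lra.
by rewrite /Rdiv Rmult_assoc Rinv_l; nra.
Qed.

Lemma INR_expn (a k : nat) : INR (expn a k) = INR a ^ k.
Proof. by elim: k => [|k IH] //=; rewrite expnS mult_INR IH. Qed.

Lemma heavy_fiber (T B : finType) (S : {set T}) (f : T -> B) (c : R) :
  (0 < #|B|)%nat -> c * INR #|B| <= INR #|S| ->
  exists b, c <= INR #|[set x in S | f x == b]|.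
Proof.
move=> B_gt0 S_ge; pose fiber b := #|[set x in S | f x == b]|.
have [b max_b] := eq_bigmax fiber B_gt0; exists b.
have S_le : (#|S| <= #|B| * fiber b)%nat.
  have -> : #|S| = (\sum_b fiber b)%nat.
    rewrite -sum1_card (partition_big f predT) //; apply: eq_bigr => b' _.
    by rewrite /fiber -sum1_card; apply: eq_bigl => x; rewrite inE.
  rewrite -max_b -sum_nat_const.
  by apply: leq_sum => b' _; apply: leq_bigmax.
have := le_INR _ _ (elimT leP S_le); rewrite mult_INR -/(fiber b) => S_le'.
have B_pos : 0 < INR #|B| by apply: lt_0_INR; apply/ltP.
apply: (Rmult_le_reg_r (INR #|B|)) => //; nra.
Qed.

Lemma Rsup_lub (S : R -> Prop) (x M : R) :
  S x -> (forall y, S y -> y <= M) -> is_lub S (Rsup S).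
Proof.
move=> S_x S_le; rewrite /Rsup; apply: epsilon_spec.
have [m m_lub] := completeness S (ex_intro _ M S_le) (ex_intro _ x S_x).
by exists m.
Qed.

Section Codes.

Variables (q : nat) (O : finType) (W1 W2 : 'I_(2 ^ q) -> 'I_(2 ^ q) -> O).
Variable n : nat.

Lemma rate_log2 (Rt : R) (M : nat) :
  Rpower 2 (Rt * INR n) = INR M -> Rt * INR n = log2 (INR M).
Proof. by move=> <-; rewrite log2_Rpower. Qed.

Lemma rate_of_size (k : nat) :
  (1 <= n)%nat -> (0 < k)%nat -> Rpower 2 (log2 (INR k) / INR n * INR n) = INR k.
Proof.
move=> n_ge1 k_gt0; have n_pos : 0 < INR n by apply: lt_0_INR; apply/ltP.
replace (log2 (INR k) / INR n * INR n) with (log2 (INR k)) by (field; lra).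
by apply: Rpower_log2; apply: lt_0_INR; apply/ltP.
Qed.

Lemma rate_of_one : Rpower 2 (0 * INR n) = INR 1.
Proof. by rewrite Rmult_0_l Rpower_O //; lra. Qed.

Definition success_set (M1 M2 : nat) (E1 : 'I_M1 -> word q n)
  (E2 : 'I_M2 -> word q n) (D1 : {ffun 'I_n -> O} -> 'I_M1)
  (D2 : {ffun 'I_n -> O} -> 'I_M2) : {set 'I_M1 * 'I_M2} :=
  [set p | (D1 (chan_n W1 (E1 p.1) (E2 p.2)) == p.1)
           && (D2 (chan_n W2 (E1 p.1) (E2 p.2)) == p.2)].

Lemma succ_countE (M1 M2 : nat) (E1 : 'I_M1 -> word q n)
  (E2 : 'I_M2 -> word q n) (D1 : {ffun 'I_n -> O} -> 'I_M1)
  (D2 : {ffun 'I_n -> O} -> 'I_M2) :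
  succ_count W1 W2 E1 E2 D1 D2 = #|success_set E1 E2 D1 D2|.
Proof. by []. Qed.

(* Distinct successful pairs have distinct output pairs, so a code succeeds
   on at most (#|O| ^ n) ^ 2 pairs. *)
Lemma succ_count_le (M1 M2 : nat) (E1 : 'I_M1 -> word q n)
  (E2 : 'I_M2 -> word q n) (D1 : {ffun 'I_n -> O} -> 'I_M1)
  (D2 : {ffun 'I_n -> O} -> 'I_M2) :
  (succ_count W1 W2 E1 E2 D1 D2 <= expn (expn #|O| n) 2)%nat.
Proof.
pose out p := (chan_n W1 (E1 p.1) (E2 p.2), chan_n W2 (E1 p.1) (E2 p.2)).
rewrite succ_countE -(card_in_imset (f := out)); last first.
  move=> [a b] [c d]; rewrite !inE /= => /andP[/eqP dec_a /eqP dec_b].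
  move=> /andP[/eqP dec_c /eqP dec_d] [same1 same2]; congr pair.
    by rewrite -dec_a -dec_c same1.
  by rewrite -dec_b -dec_d same2.
apply: leq_trans (max_card _) _.
by rewrite card_prod card_ffun card_ord mulnn.
Qed.

Lemma code_exists_weaken (M1 M2 : nat) (eps eps' : R) :
  eps' <= eps -> code_exists W1 W2 n M1 M2 eps' -> code_exists W1 W2 n M1 M2 eps.
Proof.
move=> le_eps [E1 [E2 [D1 [D2 succ_ge]]]]; exists E1, E2, D1, D2.
have := pos_INR (M1 * M2); nra.
Qed.

Lemma perfect_code (M1 M2 : nat) (E1 : 'I_M1 -> word q n)
  (E2 : 'I_M2 -> word q n) (D1 : {ffun 'I_n -> O} -> 'I_M1)
  (D2 : {ffun 'I_n -> O} -> 'I_M2) :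
  (forall i j, D1 (chan_n W1 (E1 i) (E2 j)) = i /\
               D2 (chan_n W2 (E1 i) (E2 j)) = j) ->
  code_exists W1 W2 n M1 M2 0.
Proof.
move=> decodes; exists E1, E2, D1, D2.
suff -> : succ_count W1 W2 E1 E2 D1 D2 = (M1 * M2)%nat by lra.
rewrite /succ_count -[M1 in RHS]card_ord -[M2 in RHS]card_ord -card_prod -cardsT.
apply: eq_card => -[i j]; rewrite !inE /=.
by have [-> ->] := decodes i j; rewrite !eqxx.
Qed.

Lemma user1_subcode (M1 M2 : nat) (E1 : 'I_M1 -> word q n)
  (E2 : 'I_M2 -> word q n) (D1 : {ffun 'I_n -> O} -> 'I_M1) (m2 : 'I_M2)
  (F : {set 'I_M1 * 'I_M2}) :
  (0 < #|F|)%nat ->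
  (forall p, p \in F -> p.2 = m2 /\ D1 (chan_n W1 (E1 p.1) (E2 m2)) = p.1) ->
  code_exists W1 W2 n #|F| 1 0.
Proof.
move=> /card_gt0P[p0 F_p0] good.
apply: (@perfect_code _ _ (fun i => E1 (enum_val i).1) (fun _ => E2 m2)
          (fun y => enum_rank_in F_p0 (D1 y, m2)) (fun _ => ord0)) => i j.
split; last by rewrite (ord1 j).
have [<- ->] := good _ (enum_valP i).
by rewrite -surjective_pairing enum_valK_in.
Qed.

Lemma user2_subcode (M1 M2 : nat) (E1 : 'I_M1 -> word q n)
  (E2 : 'I_M2 -> word q n) (D2 : {ffun 'I_n -> O} -> 'I_M2) (m1 : 'I_M1)
  (F : {set 'I_M1 * 'I_M2}) :
  (0 < #|F|)%nat ->
  (forall p, p \in F -> p.1 = m1 /\ D2 (chan_n W2 (E1 m1) (E2 p.2)) = p.2) ->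
  code_exists W1 W2 n 1 #|F| 0.
Proof.
move=> /card_gt0P[p0 F_p0] good.
apply: (@perfect_code _ _ (fun _ => E1 m1) (fun j => E2 (enum_val j).2)
          (fun _ => ord0) (fun y => enum_rank_in F_p0 (m1, D2 y))) => i j.
split; first by rewrite (ord1 i).
have [<- ->] := good _ (enum_valP j).
by rewrite -surjective_pairing enum_valK_in.
Qed.

Lemma heavy_column (M1 M2 : nat) (eps : R) :
  (0 < M1)%nat -> (0 < M2)%nat -> eps < 1 ->
  code_exists W1 W2 n M1 M2 eps ->
  exists k : nat, (0 < k)%nat /\ (1 - eps) * INR M1 <= INR k /\
                  code_exists W1 W2 n k 1 0.
Proof.
move=> M1_gt0 M2_gt0 eps_lt1 [E1 [E2 [D1 [D2 succ_ge]]]].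
have M2_card : (0 < #|'I_M2|)%nat by rewrite card_ord.
have S_ge : (1 - eps) * INR M1 * INR #|'I_M2| <=
            INR #|success_set E1 E2 D1 D2|.
  by rewrite card_ord; move: succ_ge; rewrite mult_INR succ_countE; lra.
have [m2 heavy] := heavy_fiber snd M2_card S_ge.
set F := [set p in _ | p.2 == m2] in heavy.
have F_gt0 : (0 < #|F|)%nat.
  apply/ltP; apply: (INR_lt 0); apply: Rlt_le_trans heavy.
  by apply: Rmult_lt_0_compat; [lra | apply: lt_0_INR; apply/ltP].
exists #|F|; do 2!split => //.
apply: (user1_subcode (E1 := E1) (E2 := E2) (D1 := D1) (m2 := m2) F_gt0).
by move=> p; rewrite !inE => /andP[/andP[/eqP dec1 _] /eqP <-].
Qed.

Lemma heavy_row (M1 M2 : nat) (eps : R) :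
  (0 < M1)%nat -> (0 < M2)%nat -> eps < 1 ->
  code_exists W1 W2 n M1 M2 eps ->
  exists k : nat, (0 < k)%nat /\ (1 - eps) * INR M2 <= INR k /\
                  code_exists W1 W2 n 1 k 0.
Proof.
move=> M1_gt0 M2_gt0 eps_lt1 [E1 [E2 [D1 [D2 succ_ge]]]].
have M1_card : (0 < #|'I_M1|)%nat by rewrite card_ord.
have S_ge : (1 - eps) * INR M2 * INR #|'I_M1| <=
            INR #|success_set E1 E2 D1 D2|.
  by rewrite card_ord; move: succ_ge; rewrite mult_INR succ_countE; lra.
have [m1 heavy] := heavy_fiber fst M1_card S_ge.
set F := [set p in _ | p.1 == m1] in heavy.
have F_gt0 : (0 < #|F|)%nat.
  apply/ltP; apply: (INR_lt 0); apply: Rlt_le_trans heavy.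
  by apply: Rmult_lt_0_compat; [lra | apply: lt_0_INR; apply/ltP].
exists #|F|; do 2!split => //.
apply: (user2_subcode (E1 := E1) (E2 := E2) (D2 := D2) (m1 := m1) F_gt0).
by move=> p; rewrite !inE => /andP[/andP[_ /eqP dec2] /eqP <-].
Qed.

Lemma user1_rate (k : nat) :
  (1 <= n)%nat -> (0 < k)%nat -> code_exists W1 W2 n k 1 0 ->
  sum_rates W1 W2 n 0 (log2 (INR k) / INR n).
Proof.
move=> n_ge1 k_gt0 code; exists (log2 (INR k) / INR n), 0; split; last lra.
by exists k, 1%nat; do !split => //; [exact: rate_of_size | exact: rate_of_one].
Qed.

Lemma user2_rate (k : nat) :
  (1 <= n)%nat -> (0 < k)%nat -> code_exists W1 W2 n 1 k 0 ->
  sum_rates W1 W2 n 0 (log2 (INR k) / INR n).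
Proof.
move=> n_ge1 k_gt0 code; exists 0, (log2 (INR k) / INR n); split; last lra.
by exists 1%nat, k; do !split => //; [exact: rate_of_one | exact: rate_of_size].
Qed.

Lemma input_alphabet_nonempty : (0 < 2 ^ q)%nat.
Proof. by apply: leq_ltn_trans (leq0n q) _; apply/ltP; exact: Nat.pow_gt_lin_r. Qed.

Lemma zero_rate (eps : R) : 0 <= eps -> sum_rates W1 W2 n eps 0.
Proof.
move=> eps_ge0; exists 0, 0; split; last lra.
exists 1%nat, 1%nat; do !split => //; try exact: rate_of_one.
pose x0 : 'I_(2 ^ q) := Ordinal input_alphabet_nonempty.
apply: (code_exists_weaken eps_ge0).
apply: (@perfect_code 1 1 (fun _ => [ffun _ => x0]) (fun _ => [ffun _ => x0])
          (fun _ => ord0) (fun _ => ord0)) => i j.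
by rewrite (ord1 i) (ord1 j).
Qed.

(* A zero-error code is injective on message pairs into output pairs, so
   every zero-error sum rate is at most 2 log2 #|O|. *)
Lemma zero_error_rate_le (r : R) :
  (1 <= n)%nat -> sum_rates W1 W2 n 0 r -> r <= 2 * log2 (INR #|O|).
Proof.
move=> n_ge1 [R1 [R2 [[M1 [M2 [M1_gt0 [M2_gt0 [rate1 [rate2 code]]]]]] ->]]].
move: code => [E1 [E2 [D1 [D2 succ_ge]]]].
pose x0 : 'I_(2 ^ q) := Ordinal input_alphabet_nonempty.
have O_pos : 0 < INR #|O|.
  by apply: lt_0_INR; apply/ltP; apply/card_gt0P; exists (W1 x0 x0).
have M1_pos : 0 < INR M1 by apply: lt_0_INR; apply/ltP.
have M2_pos : 0 < INR M2 by apply: lt_0_INR; apply/ltP.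
have n_pos : 0 < INR n by apply: lt_0_INR; apply/ltP.
have count := le_INR _ _ (elimT leP (succ_count_le E1 E2 D1 D2)).
rewrite !INR_expn in count; rewrite mult_INR in succ_ge.
have pairs_le : INR M1 * INR M2 <= (INR #|O| ^ n) ^ 2 by lra.
have := log2_le (Rmult_lt_0_compat _ _ M1_pos M2_pos) pairs_le.
rewrite log2_mult // !log2_pow //; last exact: pow_lt.
rewrite -(rate_log2 rate1) -(rate_log2 rate2) (_ : INR 2 = 2) // => log_le.
apply: (Rmult_le_reg_r (INR n)) => //; nra.
Qed.

Lemma eps_rate_le (eps C0 : R) :
  (1 <= n)%nat -> 0 < eps < 1 -> (forall r, sum_rates W1 W2 n 0 r -> r <= C0) ->
  forall r, sum_rates W1 W2 n eps r ->
  r <= 2 * (C0 + - log2 (1 - eps) / INR n).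
Proof.
move=> n_ge1 eps_bounds C0_ub r.
move=> [R1 [R2 [[M1 [M2 [M1_gt0 [M2_gt0 [rate1 [rate2 code]]]]]] ->]]].
have n_pos : 0 < INR n by apply: lt_0_INR; apply/ltP.
suff user_le : forall (Rt : R) (M k : nat),
    Rpower 2 (Rt * INR n) = INR M -> (0 < M)%nat -> (1 - eps) * INR M <= INR k ->
    sum_rates W1 W2 n 0 (log2 (INR k) / INR n) ->
    Rt <= C0 + - log2 (1 - eps) / INR n.
  have [k1 [k1_gt0 [k1_ge code1]]] := heavy_column M1_gt0 M2_gt0 (proj2 eps_bounds) code.
  have [k2 [k2_gt0 [k2_ge code2]]] := heavy_row M1_gt0 M2_gt0 (proj2 eps_bounds) code.
  have := user_le _ _ _ rate1 M1_gt0 k1_ge (user1_rate n_ge1 k1_gt0 code1).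
  have := user_le _ _ _ rate2 M2_gt0 k2_ge (user2_rate n_ge1 k2_gt0 code2).
  lra.
move=> Rt M k rate_M M_gt0 k_ge rate_k.
have M_pos : 0 < INR M by apply: lt_0_INR; apply/ltP.
have kept_pos : 0 < 1 - eps by lra.
have := rate_loss n_pos M_pos kept_pos (rate_log2 rate_M) k_ge.
have := C0_ub _ rate_k; lra.
Qed.

Lemma zero_error_cap_lub :
  (1 <= n)%nat -> is_lub (sum_rates W1 W2 n 0) (sum_cap_n W1 W2 n 0).
Proof.
move=> n_ge1; apply: (Rsup_lub (zero_rate (Rle_refl 0))) => r.
exact: zero_error_rate_le.
Qed.

Lemma cap_n_le (eps : R) :
  (1 <= n)%nat -> 0 < eps < 1 ->
  sum_cap_n W1 W2 n eps <= 2 * (sum_cap_n W1 W2 n 0 + - log2 (1 - eps) / INR n).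
Proof.
move=> n_ge1 eps_bounds.
have rates_le := eps_rate_le n_ge1 eps_bounds (proj1 (zero_error_cap_lub n_ge1)).
have eps_ge0 : 0 <= eps by lra.
have eps_lub := Rsup_lub (zero_rate eps_ge0) rates_le.
exact: (proj2 eps_lub).
Qed.

End Codes.

Lemma cap_le (q : nat) (O : finType) (W1 W2 : 'I_(2 ^ q) -> 'I_(2 ^ q) -> O)
  (eps : R) :
  0 < eps < 1 -> sum_cap W1 W2 eps <= 2 * (sum_cap W1 W2 0 + - log2 (1 - eps)).
Proof.
move=> eps_bounds.
have lub0 : is_lub (fun r => exists n, (1 <= n)%nat /\ r = sum_cap_n W1 W2 n 0)
                   (sum_cap W1 W2 0).
  apply: (@Rsup_lub _ (sum_cap_n W1 W2 1 0) (2 * log2 (INR #|O|))).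
    by exists 1%nat.
  move=> _ [n [n_ge1 ->]]; apply: (proj2 (zero_error_cap_lub W1 W2 n_ge1)) => r.
  exact: zero_error_rate_le.
have loss_ge0 : 0 <= - log2 (1 - eps) by have := @log2_nonpos (1 - eps); lra.
have caps_le : forall r, (exists n, (1 <= n)%nat /\ r = sum_cap_n W1 W2 n eps) ->
    r <= 2 * (sum_cap W1 W2 0 + - log2 (1 - eps)).
  move=> _ [n [n_ge1 ->]].
  have := cap_n_le W1 W2 n_ge1 eps_bounds.
  have := proj1 lub0 _ (ex_intro _ n (conj n_ge1 erefl)).
  have := div_INR_le loss_ge0 n_ge1; lra.
have cap_1 : exists n, (1 <= n)%nat /\ sum_cap_n W1 W2 1 eps = sum_cap_n W1 W2 n eps.
  by exists 1%nat.
exact: (proj2 (Rsup_lub cap_1 caps_le)).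
Qed.

Local Close Scope R_scope.

Theorem lemma1 (q : nat) (O : finType) (W1 W2 : 'I_(2 ^ q) -> 'I_(2 ^ q) -> O)
  (eps : R) :
  (1 <= q)%N -> (0 < eps < 1)%R ->
  (forall n : nat, (1 <= n)%N ->
     (sum_cap_n W1 W2 n eps / 2 - (- log2 (1 - eps) / INR n)
        <= sum_cap_n W1 W2 n 0)%R) /\
  (sum_cap W1 W2 eps / 2 - (- log2 (1 - eps)) <= sum_cap W1 W2 0)%R.
Proof.
move=> _ eps_bounds; split.
  by move=> n n_ge1; have := cap_n_le W1 W2 n_ge1 eps_bounds; lra.
by have := cap_le W1 W2 eps_bounds; lra.
Qed.
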